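(* Let $s\ge1$ and let $T\in\mathcal{T}(s)\setminus B(s\varpi_2)$ with $T$ not equal to the tableau all of whose $s$ columns are $\binom{1}{\bar1}$. Then there is a unique $a\in\{1,\dots,n,\bar n\}$ and a unique $m\in\mathbb{Z}_{>0}$ such that $T$ contains, as a sequence of consecutive columns, one of the following configurations (writing $\binom{a}{\bar a}^{m}$ for $m$ consecutive columns $\binom{a}{\bar a}$): (i) $\binom{a}{b_1}\binom{a}{\bar a}^{m}\binom{c_1}{d_1}$, where $b_1\ne\bar a$, and $c_1\neq a$ or $d_1\ne\bar a$; (ii) $\binom{b_2}{c_2}\binom{a}{\bar a}^{m}\binom{d_2}{\bar a}$, where $d_2\ne a$, and $b_2\ne a$ or $c_2\neq\bar a$; (iii) $\binom{b_3}{c_3}\binom{a}{\bar a}^{m+1}\binom{d_3}{e_3}$, where $b_3\ne a$ and $e_3\ne\bar a$; where a bounding column $\binom{c_1}{d_1}$, $\binom{b_2}{c_2}$, $\binom{b_3}{c_3}$ or $\binom{d_3}{e_3}$ may be absent when the block of columns $\binom{a}{\bar a}$ reaches the corresponding end of $T$, in which case the condition on it is vacuous.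
   Context: Let $n\ge4$. Alphabet: $1<2<\dots<n-1<\{n,\bar n\}<\overline{n-1}<\dots<\bar2<\bar1$, a partial order in which $n$ and $\bar n$ are incomparable; we set $\bar{\bar i}=i$. A tableau of shape $(k,k)$ is a sequence of $k$ columns, column $j$ having top entry $a_j$ and bottom entry $b_j$ from this alphabet; we write it $\binom{a_1}{b_1}\cdots\binom{a_k}{b_k}$ (here $\binom{x}{y}$ denotes a column with top $x$ and bottom $y$, not a binomial coefficient). Conditions: (C1) $a_j\le a_{j+1}$ and $b_j\le b_{j+1}$ for all $j$; (C2) $b_j\not\le a_j$ for all $j$; (C3) there is no $j$ and letter $x$ with $a_j=a_{j+1}=x$, $b_{j+1}=\bar x$, and no $j$ and $x$ with $a_j=x$, $b_j=b_{j+1}=\bar x$; (C4) there are no $j<j'$ with $\binom{a_j}{b_j}=\binom{n-1}{n}$ and $\binom{a_{j'}}{b_{j'}}=\binom{n}{\overline{n-1}}$, and no $j<j'$ with $\binom{a_j}{b_j}=\binom{n-1}{\bar n}$ and $\binom{a_{j'}}{b_{j'}}=\binom{\bar n}{\overline{n-1}}$; (C5) no column equals $\binom{1}{\bar1}$. $B(k\varpi_2)$ denotes the set of tableaux of shape $(k,k)$ satisfying (C1)--(C5) (the Kashiwara--Nakashima tableaux of type $D_n$ of shape $(k,k)$), and $\mathcal{T}(s)$ the set of tableaux of shape $(s,s)$ satisfying (C1), (C2) and (C4). *)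

From mathcomp Require Import all_boot.
Set Implicit Arguments. Unset Strict Implicit. Unset Printing Implicit Defensive.

(* A letter of the type D_n alphabet: (false, k) is the letter k and
   (true, k) is the letter \bar k, for 1 <= k <= n. *)
Definition letter := (bool * nat)%type.

Definition valid_letter (n : nat) (x : letter) : bool := (0 < x.2 <= n).

Definition bar (x : letter) : letter := (~~ x.1, x.2).

(* the partial order 1 < 2 < ... < n-1 < {n, \bar n} < \bar{n-1} < ... < \bar 1 *)
Definition lle (n : nat) (x y : letter) : bool :=
  match x, y with
  | (false, i), (false, j) => i <= j
  | (true, i), (true, j) => j <= i
  | (false, i), (true, j) => ~~ ((i == n) && (j == n))
  | (true, _), (false, _) => false
  end.

(* A column (top, bottom); a tableau of shape (s,s) is the sequence of its
   s columns from left to right. *)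
Definition column := (letter * letter)%type.
Definition tableau := seq column.

Definition C0 (n s : nat) (T : tableau) : bool :=
  (size T == s) && all (fun c => valid_letter n c.1 && valid_letter n c.2) T.

Definition C1 (n : nat) (T : tableau) : bool :=
  sorted (fun c d => lle n c.1 d.1 && lle n c.2 d.2) T.

Definition C2 (n : nat) (T : tableau) : bool :=
  all (fun c => ~~ lle n c.2 c.1) T.

Definition C3 (T : tableau) : bool :=
  sorted (fun c d => ~~ ((c.1 == d.1) && (d.2 == bar c.1))
                  && ~~ ((c.2 == d.2) && (c.2 == bar c.1))) T.

Definition C4 (n : nat) (T : tableau) : Prop :=
  forall i j, i < j < size T ->
    ~ (nth (bar (false, 1), bar (false, 1)) T i = ((false, n.-1), (false, n)) /\
       nth (bar (false, 1), bar (false, 1)) T j = ((false, n), (true, n.-1))) /\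
    ~ (nth (bar (false, 1), bar (false, 1)) T i = ((false, n.-1), (true, n)) /\
       nth (bar (false, 1), bar (false, 1)) T j = ((true, n), (true, n.-1))).

Definition C5 (T : tableau) : bool :=
  all (fun c => c != ((false, 1), (true, 1))) T.

Definition inT (n s : nat) (T : tableau) : Prop :=
  [/\ C0 n s T, C1 n T, C2 n T & C4 n T].

Definition inB (n s : nat) (T : tableau) : Prop :=
  C0 n s T /\ C1 n T /\ C2 n T /\ C3 T /\ C4 n T /\ C5 T.

Definition admissible_a (n : nat) (a : letter) : bool :=
  ((a.1 == false) && (0 < a.2 <= n)) || (a == (true, n)).

Definition config1 (T : tableau) (a : letter) (m : nat) : Prop :=
  exists L R b1, T = L ++ (a, b1) :: nseq m (a, bar a) ++ R /\ b1 <> bar a /\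
    (forall c R', R = c :: R' -> c <> (a, bar a)).

Definition config2 (T : tableau) (a : letter) (m : nat) : Prop :=
  exists L R d2, T = L ++ nseq m (a, bar a) ++ (d2, bar a) :: R /\ d2 <> a /\
    (forall L' c, L = rcons L' c -> c <> (a, bar a)).

Definition config3 (T : tableau) (a : letter) (m : nat) : Prop :=
  exists L R, T = L ++ nseq m.+1 (a, bar a) ++ R /\
    (forall L' c, L = rcons L' c -> c.1 <> a) /\
    (forall c R', R = c :: R' -> c.2 <> bar a).

Definition config (T : tableau) (a : letter) (m : nat) : Prop :=
  config1 T a m \/ config2 T a m \/ config3 T a m.

From mathcomp Require Import all_boot zify.
Set Implicit Arguments. Unset Strict Implicit. Unset Printing Implicit Defensive.

(* Two selfbar columns comparable
   for the row order (C1) coincide, so the selfbar columns of T form one block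
   (a, bar a)^k with selfbar-free parts L and R on either side.  Every violation
   of (C3) or (C5) involves that block, and the configuration is read off from
   it: if the block is attached (the last column of L has top a, or the first
   column of R has bottom bar a) we are in case (i) or (ii) with m = k;
   otherwise k = 1 would put T in B(s varpi_2) (or make T the excluded
   tableau when a = 1), so k >= 2 and we are in case (iii) with m = k - 1.
   Uniqueness holds because L, k, a and R are determined by T. *)

Lemma bar_neq (x : letter) : bar x != x.
Proof. by case: x => [[] i]. Qed.

Lemma maximal_nseq_prefix (T : eqType) (s : seq T) x :
  exists k R, s = nseq k x ++ R /\ (forall d R', R = d :: R' -> d <> x).
Proof.
elim: s => [|y s [k [R [-> hR]]]]; first by exists 0, [::].
case: (y =P x) => [->|yx]; first by exists k.+1, R.
by exists 0, (y :: nseq k x ++ R); split => // d R' [<-].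
Qed.

Definition selfbar (c : column) : bool := c.2 == bar c.1.

Lemma selfbar_diag a : selfbar (a, bar a).
Proof. exact: eqxx. Qed.

(* The defaults make each test false on an empty side, since [a != bar a]. *)
Definition attached (a : letter) (L R : tableau) : bool :=
  ((last (bar a, bar a) L).1 == a) || ((head (a, a) R).2 == bar a).

Lemma attachedP a L R :
  reflect ((exists L' b, L = rcons L' (a, b)) \/ (exists d R', R = (d, bar a) :: R'))
          (attached a L R).
Proof.
apply: (iffP orP) => [[]|[[L' [b ->]]|[d [R' ->]]]]; last 2 first.
- by left; rewrite last_rcons.
- by right.
- case/lastP: L => [|L [c b]]; first by rewrite (negbTE (bar_neq a)).
  by rewrite last_rcons => /eqP /= ->; left; exists L, b.
- case: R => [|[d e] R] /=; first by rewrite eq_sym (negbTE (bar_neq a)).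
  by move=> /eqP ->; right; exists d, R.
Qed.

Definition block (T L : tableau) (k : nat) (a : letter) (R : tableau) : Prop :=
  [/\ T = L ++ nseq k (a, bar a) ++ R, ~~ has selfbar L & ~~ has selfbar R].

Lemma block_config_attached T L k a R :
  block T L k a R -> 0 < k -> attached a L R -> config T a k.
Proof.
case=> -> freeL freeR k0 /attachedP[[L' [b EL]]|[d [R' ER]]].
- left; exists L', R, b; split; [by rewrite EL cat_rcons | split].
  + by move=> eb; move: freeL; rewrite EL has_rcons eb selfbar_diag.
  + by move=> c R' ER ec; move: freeR; rewrite ER /= ec selfbar_diag.
- right; left; exists L, R', d; split; [by rewrite ER | split].
  + by move=> ed; move: freeR; rewrite ER /= ed selfbar_diag.
  + by move=> L' c EL ec; move: freeL; rewrite EL has_rcons ec selfbar_diag.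
Qed.

Lemma block_config_detached T L k a R :
  block T L k.+1 a R -> ~~ attached a L R -> config T a k.
Proof.
case=> -> _ _ /attachedP detached; right; right; exists L, R; do 2!split => //.
- move=> L' [c b] EL /= ca; apply: detached; left; exists L', b.
  by rewrite EL ca.
- move=> [d b] R' ER /= ba; apply: detached; right; exists d, R'.
  by rewrite ER ba.
Qed.

Lemma block_unique T L k a R L' k' a' R' :
  0 < k -> block T L k a R -> block T L' k' a' R' ->
  [/\ L = L', k = k', a = a' & R = R'].
Proof.
have find_block L0 k0 a0 R0 : 0 < k0 -> ~~ has selfbar L0 ->
    find selfbar (L0 ++ nseq k0 (a0, bar a0) ++ R0) = size L0.
  by case: k0 => // k0 _ /negbTE freeL0; rewrite find_cat freeL0 /= selfbar_diag addn0.
have count_block L0 k0 a0 R0 : ~~ has selfbar L0 -> ~~ has selfbar R0 ->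
    count selfbar (L0 ++ nseq k0 (a0, bar a0) ++ R0) = k0.
  rewrite !has_count !lt0n !negbK => /eqP freeL0 /eqP freeR0.
  by rewrite !count_cat freeL0 freeR0 count_nseq selfbar_diag mul1n addn0.
move=> k0 [ET fL fR] [ET' fL' fR'].
have ek : k = k' by rewrite -(count_block L k a R) // -ET ET' count_block.
have eL : size L = size L'.
  by rewrite -(find_block L k a R) // -ET ET' find_block // -ek.
move/eqP: ET'; rewrite ET -ek eqseq_cat // => /andP[/eqP -> ].
rewrite eqseq_cat ?size_nseq // => /andP[/eqP ex /eqP ->].
by move/(congr1 (nth (a, bar a) ^~ 0)): ex; rewrite !nth_nseq k0 => -[->].
Qed.

Definition C3_adj (c d : column) : bool :=
  ~~ ((c.1 == d.1) && (d.2 == bar c.1)) && ~~ ((c.2 == d.2) && (c.2 == bar c.1)).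

Lemma C3_adj_of c d :
  (c.1 != d.1) || ~~ selfbar d -> (c.2 != d.2) || ~~ selfbar c -> C3_adj c d.
Proof.
case: c d => [c1 c2] [d1 d2]; rewrite /C3_adj /selfbar /= => h1 h2.
apply/andP; split; apply/negP => /andP[/eqP e1 /eqP e2].
- by move: h1; rewrite e2 e1 !eqxx.
- by move: h2; rewrite -e1 e2 !eqxx.
Qed.

Lemma selfbar_free_path c s :
  ~~ selfbar c -> ~~ has selfbar s -> path C3_adj c s.
Proof.
elim: s c => [|d s IH] c //= sc /norP[sd ss].
by rewrite IH // andbT C3_adj_of ?sc ?sd ?orbT.
Qed.

Lemma selfbar_free_C3 s : ~~ has selfbar s -> C3 s.
Proof. by case: s => [|c s] //= /norP[]; apply: selfbar_free_path. Qed.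

Lemma selfbar_free_C5 s : ~~ has selfbar s -> C5 s.
Proof.
move=> /hasPn free; apply/allP => c /free; apply: contra => /eqP ->.
exact: selfbar_diag.
Qed.

Lemma detached_singleton_C3 L a R :
  ~~ has selfbar L -> ~~ has selfbar R -> ~~ attached a L R ->
  C3 (L ++ (a, bar a) :: R).
Proof.
move=> freeL freeR /attachedP detached.
change (sorted C3_adj (L ++ (a, bar a) :: R)).
rewrite sorted_cat_cons; apply/andP; split.
- case: L freeL detached => [|c L] // freeL detached.
  have [sc sL] := norP freeL.
  rewrite /= rcons_path selfbar_free_path //= C3_adj_of //.
    apply/orP; left; apply/eqP => /= ea; apply: detached; left.
    by exists (belast c L), (last c L).2; rewrite -ea -surjective_pairing -lastI.
  by apply/orP; right; move/hasPn: freeL => -> //; rewrite mem_last.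
- case: R freeR detached => [|[d b] R] //= /norP[sd sR] detached.
  rewrite selfbar_free_path // andbT C3_adj_of ?sd ?orbT //=.
  apply/orP; left; apply/eqP => eb; apply: detached; right.
  by exists d, R; rewrite eb.
Qed.

Section RowOrder.

Variable n : nat.

Definition col_le (c d : column) : bool := lle n c.1 d.1 && lle n c.2 d.2.

Definition valid_column (c : column) : bool := valid_letter n c.1 && valid_letter n c.2.

Lemma lle_bar x y : lle n (bar y) (bar x) = lle n x y.
Proof. by case: x => [[] i]; case: y => [[] j] //=; rewrite andbC. Qed.

Lemma lle_anti x y : lle n x y -> lle n y x -> x = y.
Proof. by case: x => [[] i]; case: y => [[] j] //= ? ?; congr pair; lia. Qed.

(* Transitivity fails only through an out-of-range middle letter. *)
Lemma lle_trans x y z : y.2 <= n -> lle n x y -> lle n y z -> lle n x z.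
Proof. by case: x => [[] i]; case: y => [[] j]; case: z => [[] k] //=; lia. Qed.

Lemma lle_one x : valid_letter n x -> lle n x (false, 1) -> x = (false, 1).
Proof. by case: x => [[] i] //=; rewrite /valid_letter /= => ? ?; congr pair; lia. Qed.

Lemma lle_one_bar x : valid_letter n x -> lle n (true, 1) x -> x = (true, 1).
Proof. by case: x => [[] i] //=; rewrite /valid_letter /= => ? ?; congr pair; lia. Qed.

Lemma col_le_anti c d : col_le c d -> col_le d c -> c = d.
Proof.
case: c d => [c1 c2] [d1 d2] /andP[/= le1 le2] /andP[/= ge1 ge2].
by rewrite (lle_anti le1 ge1) (lle_anti le2 ge2).
Qed.

Lemma selfbar_le c d : selfbar c -> selfbar d -> col_le c d -> c = d.
Proof.
case: c d => [a b] [a' b'] /eqP /= -> /eqP /= -> /andP[/= le ge].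
by rewrite (lle_anti le (_ : lle n a' a)) // -lle_bar.
Qed.

Lemma C1_pairwise s T : C0 n s T -> C1 n T -> pairwise col_le T.
Proof.
case/andP=> _ valid; rewrite /C1 (@sorted_pairwise_in _ valid_column) //.
move=> d c e /andP[/andP[_ d1] /andP[_ d2]] _ _ /andP[cd1 cd2] /andP[de1 de2].
by rewrite /col_le (lle_trans d1 cd1 de1) (lle_trans d2 cd2 de2).
Qed.

Lemma prefix_selfbar_free L x :
  pairwise col_le (rcons L x) -> selfbar x ->
  (forall L' c, L = rcons L' c -> c <> x) -> ~~ has selfbar L.
Proof.
case/lastP: L => [//|L c]; rewrite !pairwise_rcons all_rcons.
move=> /andP[/andP[cx /allP Lx] /andP[/allP Lc _]] sx /(_ L c erefl) c_neq.
apply/hasPn => y; rewrite mem_rcons inE => /orP[/eqP ->|yL]; apply/negP => sy.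
- by apply: c_neq; apply: selfbar_le.
- have yx : y = x by apply: selfbar_le => //; apply: Lx.
  by apply: c_neq; apply: col_le_anti cx _; rewrite -yx; apply: Lc.
Qed.

Lemma suffix_selfbar_free x R :
  pairwise col_le (x :: R) -> selfbar x ->
  (forall d R', R = d :: R' -> d <> x) -> ~~ has selfbar R.
Proof.
case: R => [//|d R] /= /andP[/andP[xd /allP xR] /andP[/allP dR _]] sx.
move=> /(_ d R erefl) d_neq.
rewrite negb_or; apply/andP; split.
- by apply/negP => sd; apply: d_neq; apply/esym/selfbar_le.
- apply/hasPn => y yR; apply/negP => sy.
  have yx : x = y by apply: selfbar_le => //; apply: xR.
  by apply: d_neq; apply/esym/(col_le_anti xd); rewrite yx; apply: dR.
Qed.

Lemma block_of_maximal L k a R (x := (a, bar a)) :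
  pairwise col_le (L ++ nseq k x ++ R) -> 0 < k ->
  (forall L' c, L = rcons L' c -> c <> x) -> (forall d R', R = d :: R' -> d <> x) ->
  block (L ++ nseq k x ++ R) L k a R.
Proof.
move=> le_T k0 hL hR; have x_in : x \in nseq k x by rewrite mem_nseq k0 eqxx.
split => //.
- apply: prefix_selfbar_free hL; last exact: selfbar_diag.
  apply: subseq_pairwise le_T; rewrite -cats1.
  by apply: cat_subseq (subseq_refl L) _; rewrite sub1seq mem_cat x_in.
- apply: suffix_selfbar_free hR; last exact: selfbar_diag.
  apply: subseq_pairwise le_T; rewrite catA -cat1s.
  by apply: cat_subseq _ (subseq_refl R); rewrite sub1seq mem_cat x_in orbT.
Qed.

Lemma selfbar_block T :
  pairwise col_le T -> has selfbar T -> exists L k a R, 0 < k /\ block T L k a R.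
Proof.
move=> le_T has_T; case: (split_find has_T) le_T => [[a b] L R1 /eqP /= -> freeL].
have [k [R [-> hR]]] := maximal_nseq_prefix R1 (a, bar a).
rewrite cat_rcons -[_ :: _]/(nseq k.+1 (a, bar a) ++ R) => le_T.
exists L, k.+1, a, R; split => //; apply: block_of_maximal => // L' c EL cx.
by move: freeL; rewrite EL has_rcons cx selfbar_diag.
Qed.

Lemma config_block T a m :
  pairwise col_le T -> 0 < m -> config T a m ->
  exists L R, block T L (if attached a L R then m else m.+1) a R.
Proof.
move=> + m0 cfg; case: cfg => [[L [R [b [-> [b_neq hR]]]]]|
  [[L [R [d [-> [d_neq hL]]]]]|[L [R [-> [hL hR]]]]]] le_T.
- rewrite -cat_rcons in le_T *; exists (rcons L (a, b)), R.
  rewrite /attached last_rcons eqxx /=.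
  by apply: block_of_maximal => // L' c /rcons_inj[_ <-] [].
- exists L, ((d, bar a) :: R); rewrite /attached /= eqxx orbT.
  by apply: block_of_maximal => // c R' [<- _] [].
- exists L, R; case: attachedP => [[[L' [b EL]]|[d [R' ER]]]|_].
  + by case: (hL L' (a, b) EL).
  + by case: (hR (d, bar a) R' ER).
  apply: block_of_maximal => //.
  + by move=> L' c /hL ca ex; apply: ca; rewrite ex.
  + by move=> c R' /hR cb ex; apply: cb; rewrite ex.
Qed.

Lemma config_unique T a m a' m' :
  pairwise col_le T -> 0 < m -> 0 < m' -> config T a m -> config T a' m' ->
  a' = a /\ m' = m.
Proof.
move=> le_T m0 m0' /(config_block le_T m0)[L [R bl]].
move=> /(config_block le_T m0')[L' [R' bl']].
have k0 : 0 < (if attached a L R then m else m.+1) by case: ifP.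
have [eL ek ea eR] := block_unique k0 bl bl'; subst L' a' R'.
by split => //; case: attached ek => [|[]].
Qed.

Lemma detached_block_one T L k R (x := ((false, 1), (true, 1))) :
  pairwise col_le T -> all valid_column T -> block T L k.+1 (false, 1) R ->
  ~~ attached (false, 1) L R -> L = [::] /\ R = [::].
Proof.
move=> le_T /allP valid [ET _ _] /attachedP detached.
have x_in : x \in nseq k.+1 x by rewrite mem_head.
move: le_T; rewrite ET pairwise_cat => /and3P[/allrelP leL _].
rewrite pairwise_cat => /and3P[/allrelP leR _ _].
split.
- case/lastP: L ET leL detached => [//|L [c b]] ET leL detached; exfalso.
  have cL : (c, b) \in rcons L (c, b) by rewrite mem_rcons mem_head.
  have /andP[c_le _] : col_le (c, b) x by apply: leL; rewrite ?mem_cat ?x_in.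
  have /andP[vc _] : valid_column (c, b) by apply: valid; rewrite ET mem_cat cL.
  by apply: detached; left; exists L, b; rewrite -(lle_one vc c_le).
- case: R ET leL leR detached => [//|[d b] R] ET _ leR detached; exfalso.
  have dR : (d, b) \in (d, b) :: R by rewrite mem_head.
  have /andP[_ le_b] : col_le x (d, b) by apply: leR.
  have /andP[_ vb] : valid_column (d, b) by apply: valid; rewrite ET !mem_cat dR !orbT.
  by apply: detached; right; exists d, R; move: (lle_one_bar vb le_b) => /= ->.
Qed.

Lemma detached_singleton_inB s T L a R :
  inT n s T -> block T L 1 a R -> ~~ attached a L R -> a != (false, 1) ->
  inB n s T.
Proof.
case=> T0 T1 T2 T4 [ET freeL freeR] detached a1.
do !split => //; rewrite ET /=; first exact: detached_singleton_C3.
rewrite /C5 all_cat /= -/(C5 L) -/(C5 R) !selfbar_free_C5 // andbT.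
by rewrite xpair_eqE (negbTE a1).
Qed.

Lemma admissible_of_C2 a : valid_letter n a -> ~~ lle n (bar a) a -> admissible_a n a.
Proof.
case: a => [[] i]; rewrite /valid_letter /admissible_a /=.
- by move=> _ /negbNE /andP[/eqP -> _].
- by move=> ->.
Qed.

End RowOrder.

Theorem proposition4p1 (n s : nat) (T : tableau) :
  4 <= n -> 1 <= s ->
  inT n s T -> ~ inB n s T ->
  T <> nseq s ((false, 1), (true, 1)) ->
  exists a m,
    [/\ admissible_a n a, 0 < m & config T a m] /\
    (forall a' m', admissible_a n a' -> 0 < m' -> config T a' m' ->
       a' = a /\ m' = m).
Proof.
move=> _ _ T_in notB notAll1; have [T0 T1 T2 T4] := T_in.
have le_T := C1_pairwise T0 T1.
have vT : all (valid_column n) T by case/andP: T0.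
have [L [k [a [R [k0 bl]]]]] : exists L k a R, 0 < k /\ block T L k a R.
  apply: selfbar_block le_T _; apply/negPn/negP => free; apply: notB.
  by do !split => //; [exact: selfbar_free_C3 | exact: selfbar_free_C5].
have adm : admissible_a n a.
  have xT : (a, bar a) \in T by case: bl => -> _ _; rewrite !mem_cat mem_nseq k0 eqxx orbT.
  by apply: admissible_of_C2; [case/andP: (allP vT _ xT) | apply: (allP T2 _ xT)].
suff [m [m0 cf]] : exists m, 0 < m /\ config T a m.
  by exists a, m; split => // a' m' _ m0'; apply: config_unique le_T m0 m0' cf.
case att: (attached a L R).
  by exists k; split => //; apply: block_config_attached bl k0 _; rewrite att.
case: k k0 bl => // k _ bl.
case: (a =P (false, 1)) => [ea | a1].
  rewrite ea in bl att; have [L0 R0] := detached_block_one le_T vT bl (negbT att).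
  case: bl notAll1 => ET _ _; case/andP: T0 => /eqP <- _.
  by rewrite ET L0 R0 cats0 size_nseq.
case: k bl => [|k] bl.
  by case: notB; apply: detached_singleton_inB T_in bl _ _; [rewrite att | apply/eqP].
by exists k.+1; split => //; apply: block_config_detached bl _; rewrite att.
Qed.
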